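(* Let $R$ be a finite set of positive integers with $r=|R|$, let $L$ be an $R$-flag on vertex set $\{1,\dots,v(L)\}$, and let $s_1,\dots,s_{v(L)}$ be positive integers. Then, as $n\to\infty$, \[\pi_n(L(s_1,\dots,s_{v(L)}))=r-1+O(n^{-\delta}),\qquad \delta=\frac{\max\{s_i:1\le i\le v(L)\}}{\prod_{i=1}^{v(L)}s_i}.\]
   Context: A hypergraph $H=(V,E)$ has finite vertex set $V$ and edge set $E\subseteq 2^V$; $R(H)=\{|F|:F\in E\}$. $H_1\subseteq H_2$ means there is an injective $f\colon V(H_1)\to V(H_2)$ with $f(F)\in E(H_2)$ for all $F\in E(H_1)$. For $G$ on $n$ vertices, $h_n(G)=\sum_{F\in E(G)}1/\binom{n}{|F|}$; $\pi_n(H)=\max\{h_n(G): G\text{ on } n \text{ vertices}, R(G)\subseteq R(H), H\not\subseteq G\}$. An $R$-flag is a hypergraph with exactly one edge of each size in $R$ (and no other edges). For $H$ on vertex set $\{1,\dots,m\}$, the blowup $H(s_1,\dots,s_m)$ has vertex set $V_1\sqcup\dots\sqcup V_m$, $|V_i|=s_i$, and edge set $\bigcup_{F\in E(H)}\prod_{i\in F}V_i$. *)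

From HB Require Import structures.
From mathcomp Require Import all_boot all_order all_algebra.
From mathcomp Require Import reals exp.
Set Implicit Arguments. Unset Strict Implicit. Unset Printing Implicit Defensive.
Import Order.TTheory GRing.Theory Num.Theory.
Local Open Scope ring_scope.

Definition hcontains (V1 V2 : finType) (E1 : {set {set V1}}) (E2 : {set {set V2}}) : bool :=
  [exists f : {ffun V1 -> V2}, injectiveb f && [forall F in E1, (f @: F) \in E2]].

Definition sizes_sub (V1 V2 : finType) (E1 : {set {set V1}}) (E2 : {set {set V2}}) : bool :=
  [forall F in E1, [exists F' in E2, #|F| == #|F'|]].

Definition hn (R : realType) (n : nat) (E : {set {set 'I_n}}) : R :=
  \sum_(F in E) ('C(n, #|F|)%:R)^-1.

(* The max is taken with default 0; since h_n >= 0 this agrees with the true max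
   whenever the family is nonempty (it contains the edgeless graph as soon as H has an edge). *)
Definition pin (R : realType) (V : finType) (EH : {set {set V}}) (n : nat) : R :=
  \big[Num.max/0]_(E : {set {set 'I_n}} | sizes_sub E EH && ~~ hcontains EH E) hn R E.

Definition is_flag (Rs : seq nat) (m : nat) (L : {set {set 'I_m}}) : bool :=
  [forall F in L, #|F| \in Rs] &&
  all (fun k => #|[set F in L | #|F| == k]| == 1%N) Rs.

Definition bvert (m : nat) (s : 'I_m -> nat) : finType := {i : 'I_m & 'I_(s i)}.

(* Edges of L(s_1,...,s_m): the union over F in L of prod_{i in F} V_i, i.e. the sets B
   containing exactly one vertex of each V_i, i in F, and no other vertices. *)
Definition blowup (m : nat) (s : 'I_m -> nat) (L : {set {set 'I_m}}) : {set {set bvert s}} :=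
  [set B : {set bvert s} | [exists F in L, (tag @: B == F) && (#|B| == #|F|)]].

From HB Require Import structures.
From mathcomp Require Import all_boot all_order all_algebra fingroup perm.
From mathcomp Require Import reals exp.
From mathcomp Require Import ring lra zify.
Import Order.TTheory GRing.Theory Num.Theory.
Local Open Scope ring_scope.

(* Lower bound: the hypergraph of all sets whose size lies in R, except for one size k,
   has h_n = r - 1, and it does not contain L(s), which has an edge of size k.

   Upper bound: average over the injections phi : [v(L)] -> [n].  For an edge F of L the
   proportion of phi with phi(F) in G is the density of G among the |F|-sets, and phi
   maps at most r - 1 edges of L into G unless it maps all of them ("phi is good"), so
   h_n(G) <= r - 1 + (proportion of good phi).  A box V_1 x ... x V_m of good maps with
   |V_i| = s_i yields a copy of L(s) in G, and a Kovari-Sos-Turan argument (convexity in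
   one coordinate at a time, a largest s_i last) shows that a proportion of at least
   K n^(-delta) of good maps forces such a box. *)

(** * Elementary inequalities *)
Lemma chebyshev_sum_powers {R : realFieldType} {I : finType} (d : I -> R) (a : nat) :
  (forall i, 0 <= d i) ->
  (\sum_i d i) * (\sum_i d i ^+ a) <= #|I|%:R * \sum_i d i ^+ a.+1.
Proof.
move=> d_ge0.
have sum_ge0 : 0 <= \sum_i \sum_j (d i - d j) * (d i ^+ a - d j ^+ a).
  apply: sumr_ge0 => i _; apply: sumr_ge0 => j _.
  have [dij|dji] := lerP (d i) (d j).
    by apply: mulr_le0; rewrite subr_le0 //; apply: lerXn2r; rewrite ?nnegrE.
  apply: mulr_ge0; rewrite subr_ge0 ?(ltW dji) //.
  by apply: lerXn2r; rewrite ?nnegrE // ltW.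
suff E : \sum_i \sum_j (d i - d j) * (d i ^+ a - d j ^+ a) =
   2%:R * (#|I|%:R * \sum_i d i ^+ a.+1 - (\sum_i d i) * (\sum_i d i ^+ a)) by lra.
have expand i j : (d i - d j) * (d i ^+ a - d j ^+ a) =
   (d i ^+ a.+1 + d j ^+ a.+1) - (d i * d j ^+ a + d j * d i ^+ a).
  by rewrite !exprS; ring.
under eq_bigr do under eq_bigr do rewrite expand.
under eq_bigr do rewrite sumrB !big_split /=.
rewrite sumrB !big_split /=.
have -> : \sum_i \sum_(j : I) d i ^+ a.+1 = #|I|%:R * \sum_i d i ^+ a.+1.
  by rewrite mulr_sumr; apply: eq_bigr => i _; rewrite sumr_const mulr_natl.
have -> : \sum_(i : I) \sum_j d j ^+ a.+1 = #|I|%:R * \sum_i d i ^+ a.+1.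
  by rewrite sumr_const mulr_natl.
have -> : \sum_i \sum_j d i * d j ^+ a = (\sum_i d i) * \sum_i d i ^+ a.
  by rewrite mulr_suml; apply: eq_bigr => i _; rewrite mulr_sumr.
have -> : \sum_i \sum_j d j * d i ^+ a = (\sum_i d i) * \sum_i d i ^+ a.
  by rewrite mulr_sumr; apply: eq_bigr => i _; rewrite mulr_suml.
ring.
Qed.

Lemma power_mean_le {R : realFieldType} {I : finType} (d : I -> R) (a : nat) :
  (forall i, 0 <= d i) ->
  (\sum_i d i) ^+ a.+1 <= #|I|%:R ^+ a * \sum_i d i ^+ a.+1.
Proof.
move=> d_ge0; elim: a => [|a IHa]; first by rewrite expr0 mul1r.
have sum_ge0 : 0 <= \sum_i d i by apply: sumr_ge0.
rewrite exprS; apply: le_trans (ler_wpM2l sum_ge0 IHa) _.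
rewrite mulrCA [in leRHS]exprS mulrAC mulrC.
apply: ler_wpM2r; first exact: exprn_ge0.
exact: chebyshev_sum_powers.
Qed.

Lemma ffact_leq_expn (n a : nat) : (n ^_ a <= n ^ a)%N.
Proof.
elim: a => [|a IHa]; first by rewrite ffactn0 expn0.
by rewrite ffactnSr expnS mulnC leq_mul // leq_subr.
Qed.

Lemma expn_leq_ffactD (n a : nat) :
  (n ^ a.+1 <= n ^_ a.+1 + a.+1 * a.+1 * n ^ a)%N.
Proof.
elim: a => [|a IHa]; first by rewrite ffactn1 expn1 expn0; lia.
have ffactS : (n * n ^_ a.+1 <= n ^_ a.+2 + a.+1 * n ^_ a.+1)%N.
  rewrite (ffactnSr n a.+1) [(a.+1 * _)%N]mulnC -mulnDr [(n * _)%N]mulnC.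
  by rewrite leq_mul //; lia.
have := ffact_leq_expn n a.+1; move: IHa ffactS; rewrite !expnS.
set f := (n ^_ a.+1)%N; set f' := (n ^_ a.+2)%N; set e := (n ^ a)%N; nia.
Qed.

Lemma expn_leq_ffact_double (n j : nat) : (2 * j <= n)%N -> (n ^ j <= 2 ^ j * n ^_ j)%N.
Proof.
elim: j => [|j IHj] le2j; first by rewrite expn0 ffactn0.
have le_half : (n <= 2 * (n - j))%N by lia.
have := IHj ltac:(lia); rewrite ffactnSr !expnS.
set e := (n ^ j)%N; set f := (n ^_ j)%N; set p := (2 ^ j)%N; nia.
Qed.

Lemma card_non_injective_ffun (X : finType) (a : nat) :
  (#|[pred u : {ffun 'I_a.+1 -> X} | ~~ injectiveb u]| <= a.+1 * a.+1 * #|X| ^ a)%N.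
Proof.
have split_card : (#|[pred u : {ffun 'I_a.+1 -> X} | ~~ injectiveb u]| + #|X| ^_ a.+1
    = #|X| ^ a.+1)%N.
  have := card_inj_ffuns 'I_a.+1 X; have := card_ffun 'I_a.+1 X; rewrite !card_ord => <- <-.
  rewrite -(cardC [pred u : {ffun 'I_a.+1 -> X} | injectiveb u]) addnC.
  by congr (_ + _)%N; apply: eq_card => u; rewrite !inE.
by have := expn_leq_ffactD #|X| a; lia.
Qed.

Lemma exists_gt_average {R : realDomainType} {I : finType} {P : pred I} {F : I -> R} {c : R} :
  #|P|%:R * c < \sum_(i | P i) F i -> exists2 i, P i & c < F i.
Proof.
move=> avg; apply/exists_inP; apply: contraTT avg => /exists_inPn F_le.
rewrite -leNgt -sum1_card natr_sum mulr_suml; apply: ler_sum => i /F_le.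
by rewrite mul1r leNgt.
Qed.

(** * Common neighbourhoods *)

Definition density (R : numFieldType) {T : finType} (P : pred T) : R :=
  #|P|%:R / #|T|%:R.

Lemma density_ge0 (R : numFieldType) {T : finType} (P : pred T) : 0 <= density R P.
Proof. by rewrite divr_ge0 ?ler0n. Qed.

Lemma densityK (R : numFieldType) {T : finType} (P : pred T) :
  density R P * #|T|%:R = #|P|%:R.
Proof.
have [T0|T_gt0] := posnP #|T|; last by rewrite divfK // pnatr_eq0 -lt0n.
by rewrite T0 mulr0; apply/eqP; rewrite eq_sym pnatr_eq0 -leqn0 -T0 max_card.
Qed.

Section CommonNeighbourhood.
Variables (X Y : finType) (P : X -> Y -> bool).

Definition common_nbhd (S : {set X}) : {set Y} := [set y | [forall x in S, P x y]].

Definition degree (y : Y) : nat := #|[set x | P x y]|.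

Definition incidence : pred (X * Y) := [pred p | P p.1 p.2].

Lemma card_incidence : #|incidence| = (\sum_y degree y)%N.
Proof.
under eq_bigr do rewrite /degree -sum1dep_card.
rewrite (exchange_big_dep xpredT) //= pair_big_dep sum1dep_card.
by apply: eq_card => p; rewrite !inE.
Qed.

Lemma sum_card_common_nbhd_ffun (a : nat) :
  (\sum_(u : {ffun 'I_a -> X}) #|common_nbhd [set u i | i in 'I_a]| =
   \sum_y degree y ^ a)%N.
Proof.
rewrite (eq_bigr (fun u : {ffun _} => \sum_(y | [forall x in [set u i | i in 'I_a], P x y]) 1)%N);
  last by move=> u _; rewrite sum1dep_card.
rewrite (exchange_big_dep xpredT) //=; apply: eq_bigr => y _.
rewrite sum1dep_card -[a in RHS]card_ord -card_ffun_on; apply: eq_card => u.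
rewrite inE; apply/forall_inP/ffun_onP => [Pu i | Pu x].
  by rewrite inE; apply: Pu; apply: imset_f.
by case/imsetP => i _ ->; have := Pu i; rewrite inE.
Qed.

Variable R : realFieldType.
Let rho : R := density R incidence.

Lemma sum_card_common_nbhd_ge (a : nat) : (0 < #|Y|)%N ->
  rho ^+ a.+1 * (#|X| ^ a.+1 * #|Y|)%:R <=
  \sum_(u : {ffun 'I_a.+1 -> X}) #|common_nbhd [set u i | i in 'I_a.+1]|%:R.
Proof.
move=> Y_gt0; have Ya_gt0 : (0 : R) < #|Y|%:R ^+ a by rewrite exprn_gt0 ?ltr0n.
have pm := power_mean_le (fun y => (degree y)%:R : R) a (fun y => ler0n _ _).
rewrite -natr_sum -card_incidence -densityK card_prod -/rho in pm.
rewrite -natr_sum sum_card_common_nbhd_ffun natr_sum -(ler_pM2l Ya_gt0).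
under eq_bigr do rewrite natrX.
have -> : #|Y|%:R ^+ a * (rho ^+ a.+1 * (#|X| ^ a.+1 * #|Y|)%:R) =
          (rho * (#|X| * #|Y|)%:R) ^+ a.+1.
  by rewrite !natrM natrX !exprMn !exprS; ring.
exact: pm.
Qed.

Lemma exists_large_common_nbhd (a : nat) : (0 < #|Y|)%N ->
  2 * (a.+1 ^ 2)%:R < rho ^+ a.+1 * #|X|%:R ->
  exists2 S : {set X}, #|S| = a.+1 &
    rho ^+ a.+1 * #|Y|%:R / 2 <= #|common_nbhd S|%:R.
Proof.
move=> Y_gt0 rho_large.
(* Convexity makes the common neighbourhoods of all (a+1)-tuples large in total, and the
   non-injective tuples account for only a small part of that total. *)
set c := fun u : {ffun 'I_a.+1 -> X} => #|common_nbhd [set u i | i in 'I_a.+1]|.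
set A := rho ^+ a.+1 * (#|X| ^ a.+1 * #|Y|)%:R.
have X_gt0 : (0 < #|X|)%N.
  rewrite lt0n; apply: contraTneq rho_large => ->; rewrite mulr0 -leNgt.
  by rewrite mulr_ge0 ?ler0n.
have Z_gt0 : (0 : R) < (#|X| ^ a * #|Y|)%:R by rewrite ltr0n muln_gt0 expn_gt0 X_gt0.
have non_inj_small : \sum_(u : {ffun 'I_a.+1 -> X} | ~~ injectiveb u) (c u)%:R < A / 2.
  apply: (@le_lt_trans _ _ ((a.+1 * a.+1 * #|X| ^ a) * #|Y|)%:R).
    apply: (@le_trans _ _ (\sum_(u : {ffun 'I_a.+1 -> X} | ~~ injectiveb u) #|Y|%:R)).
      by apply: ler_sum => u _; rewrite ler_nat max_card.
    by rewrite sumr_const -mulrnA ler_nat mulnC leq_mul // card_non_injective_ffun.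
  move: rho_large; rewrite -(ltr_pM2r Z_gt0) /A !natrM !natrX !exprS.
  lra.
have inj_large : #|[pred u : {ffun 'I_a.+1 -> X} | injectiveb u]|%:R *
    (rho ^+ a.+1 * #|Y|%:R / 2) < \sum_(u : {ffun 'I_a.+1 -> X} | injectiveb u) (c u)%:R.
  have total := sum_card_common_nbhd_ge a Y_gt0.
  rewrite (bigID (fun u : {ffun _ -> _} => injectiveb u)) /= -/A in total.
  have card_inj : #|[pred u : {ffun 'I_a.+1 -> X} | injectiveb u]| = (#|X| ^_ a.+1)%N.
    have := card_inj_ffuns 'I_a.+1 X; rewrite card_ord => <-.
    by apply: eq_card => u; rewrite !inE.
  have ffact_le : ((#|X| ^_ a.+1)%:R : R) <= #|X|%:R ^+ a.+1.
    by rewrite -natrX ler_nat ffact_leq_expn.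
  have rY_ge0 : 0 <= rho ^+ a.+1 * #|Y|%:R.
    by rewrite mulr_ge0 ?ler0n ?exprn_ge0 ?density_ge0.
  apply: (@le_lt_trans _ _ (A / 2)); last by lra.
  by rewrite card_inj /A natrM natrX; nra.
have [u /injectiveP u_inj c_large] := exists_gt_average inj_large.
exists [set u i | i in 'I_a.+1]; first by rewrite card_imset // card_ord.
exact: ltW.
Qed.

End CommonNeighbourhood.

Arguments common_nbhd {X Y} P S.
Arguments incidence {X Y} P.
Arguments exists_large_common_nbhd {X Y P R a}.

(** * Supersaturation for boxes *)

Lemma last_leq_prod (s : seq nat) : all (fun k => 0 < k)%N s ->
  (last 0 s <= \prod_(j <- s) j)%N.
Proof.
elim: s => [|a s IHs] //= /andP[a_gt0 s_gt0]; rewrite big_cons.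
case: s IHs s_gt0 => [|b s] IHs s_gt0; first by rewrite big_nil muln1.
by apply: leq_trans (IHs s_gt0) _; rewrite leq_pmull.
Qed.

Lemma card_tuple_cons_pairs (X : finType) (k : nat) (P : pred (k.+1.-tuple X)) :
  #|[pred p : X * k.-tuple X | P [tuple of p.1 :: p.2]]| = #|P|.
Proof.
pose f (p : X * k.-tuple X) : k.+1.-tuple X := [tuple of p.1 :: p.2].
have f_inj : injective f by move=> [x y] [x' y'] /(congr1 val) [-> /val_inj ->].
rewrite -(card_image f_inj); apply: eq_card => t; apply/imageP/idP => [[p Pp ->] // | Pt].
by exists (thead t, [tuple of behead t]); rewrite ?inE /f /= -tuple_eta.
Qed.

Lemma density_cons_incidence (R : numFieldType) (X : finType) (k : nat)
    (P : pred (k.+1.-tuple X)) :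
  density R (incidence (fun x (y : k.-tuple X) => P [tuple of x :: y])) = density R P.
Proof.
by rewrite /density card_tuple_cons_pairs card_prod !card_tuple expnS.
Qed.

Definition in_box {X : finType} (t : seq X) (V : seq {set X}) : bool :=
  all2 (fun x (A : {set X}) => x \in A) t V.

(* The sides are fixed from left to right, so only the last side length costs a power
   of #|X|. *)
Definition forces_box {R : realFieldType} (ss : seq nat) (K : R) : Prop :=
  forall (X : finType) (P : pred ((size ss).-tuple X)), (0 < #|X|)%N ->
    K <= density R P ^+ (\prod_(j <- ss) j) * #|X|%:R ^+ last 0 ss ->
    exists2 V : seq {set X}, all2 (fun (A : {set X}) j => #|A| == j) V ss &
      forall t : (size ss).-tuple X, in_box t V -> P t.

Lemma forces_box_singleton (R : realFieldType) (a : nat) : forces_box [:: a] (a%:R ^+ a : R).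
Proof.
move=> X P X_gt0; rewrite big_seq1 /= -[#|X|]expn1 -card_tuple -exprMn densityK -!natrX ler_nat.
have card_P1 : #|[set x | P [tuple x]]| = #|P|.
  have tuple1_inj : injective (fun x : X => [tuple x]) by move=> x y /(congr1 val) [].
  rewrite -(card_image tuple1_inj); apply: eq_card => t.
  case/tupleP: t => x t; rewrite tuple0; apply/imageP/idP => [[y] | Px].
    by rewrite inE => Py /tuple1_inj ->.
  by exists x; rewrite ?inE.
move=> dense; have a_le : (a <= #|P|)%N.
  by have [->|a_gt0] := posnP a; rewrite // -(leq_exp2r _ _ a_gt0).
have : (0 < #|[set A : {set X} | A \subset [set x | P [tuple x]] & #|A| == a]|)%N.
  by rewrite cards_draws card_P1 bin_gt0.
case/card_gt0P => S; rewrite inE => /andP [/subsetP S_sub /eqP cardS].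
exists [:: S]; first by rewrite /= cardS eqxx.
case/tupleP=> x t; rewrite tuple0 /in_box /= andbT => /S_sub.
by rewrite inE.
Qed.

Lemma ltr_of_exprM_le (R : realFieldType) (r x c K : R) (a p M : nat) :
  0 <= r -> 1 <= x -> 1 <= c -> 1 <= K -> (0 < p)%N -> (M <= p)%N ->
  c ^+ p * 2 ^+ p * K <= r ^+ (a * p) * x ^+ M -> c < r ^+ a * x.
Proof.
move=> r_ge0 x_ge1 c_ge1 K_ge1 p_gt0 le_Mp dense; rewrite ltNge; apply/negP => small.
have : c ^+ p * 2 ^+ p * K <= c ^+ p.
  apply: le_trans dense (le_trans _ (lerXn2r _ _ _ small)); rewrite ?nnegrE; last 2 first.
  - by rewrite mulr_ge0 ?exprn_ge0 // (le_trans ler01 x_ge1).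
  - exact: le_trans ler01 c_ge1.
  by rewrite [in leRHS]exprMn -exprM ler_wpM2l ?exprn_ge0 // ler_weXn2l.
rewrite -mulrA ger_pMr ?exprn_gt0 ?(lt_le_trans ltr01 c_ge1) //; apply/negP; rewrite -ltNge.
apply: lt_le_trans (_ : 1 < 2 ^+ p) _; last by rewrite ler_peMr ?exprn_ge0.
by rewrite -natrX ltr1n -[1%N](expn0 2) ltn_exp2l.
Qed.

Lemma forces_box_cons (R : realFieldType) (a b : nat) (ss : seq nat) (K : R) :
  all (fun k => 0 < k)%N (b :: ss) -> 1 <= K -> forces_box (b :: ss) K ->
  let Pi := \prod_(j <- b :: ss) j in
  forces_box [:: a.+1, b & ss] ((2 * (a.+1 ^ 2)%:R) ^+ Pi * 2 ^+ Pi * K).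
Proof.
move=> pos K_ge1 IH Pi X P X_gt0; rewrite big_cons /= -/Pi => P_dense.
set c : R := 2 * (a.+1 ^ 2)%:R; set M := last b ss; set rho := density R P.
have Pi_gt0 : (0 < Pi)%N by rewrite /Pi big_seq_cond prodn_cond_gt0 // => j /andP[/(allP pos)].
have M_le_Pi : (M <= Pi)%N by apply: last_leq_prod.
have c_ge1 : 1 <= c by rewrite /c -natrM ler1n muln_gt0 expn_gt0.
have rho_ge0 : 0 <= rho := density_ge0 R P.
have rho_large : c < rho ^+ a.+1 * #|X|%:R.
  by apply: ltr_of_exprM_le P_dense; rewrite ?ler1n.
(* Fix a.+1 first coordinates whose common neighbourhood among the remaining tuples is
   dense, and recurse on that neighbourhood. *)
pose Q (x : X) (y : (size (b :: ss)).-tuple X) := P [tuple of x :: y].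
have Y_gt0 : (0 < #|{: (size (b :: ss)).-tuple X}|)%N by rewrite card_tuple expn_gt0 X_gt0.
have := exists_large_common_nbhd (P := Q) (R := R) (a := a) Y_gt0.
rewrite density_cons_incidence -/rho.
case/(_ rho_large) => S cardS nbhd_large.
pose P' : pred _ := [pred y | y \in common_nbhd Q S].
have dens' : rho ^+ a.+1 / 2 <= density R P'.
  rewrite /density ler_pdivlMr ?ltr0n // mulrAC; apply: le_trans nbhd_large _.
  by rewrite ler_nat; apply: eq_leq; apply: eq_card.
have P'_dense : K <= density R P' ^+ Pi * #|X|%:R ^+ M.
  apply: (@le_trans _ _ (c ^+ Pi * K)).
    by rewrite ler_peMl ?exprn_ege1 // (le_trans ler01 K_ge1).
  apply: (@le_trans _ _ ((rho ^+ a.+1 / 2) ^+ Pi * #|X|%:R ^+ M)); last first.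
    rewrite ler_wpM2r ?exprn_ge0 ?ler0n //.
    by apply: lerXn2r; rewrite ?nnegrE ?divr_ge0 ?exprn_ge0.
  rewrite expr_div_n -exprM mulrAC ler_pdivlMr ?exprn_gt0 //.
  by apply: le_trans P_dense; rewrite mulrAC.
have [V cardV boxV] := IH X P' X_gt0 P'_dense.
exists (S :: V); first by rewrite /= cardS eqxx cardV.
case/tupleP=> x y; rewrite /in_box /= => /andP [xS /boxV].
by rewrite /P' /= inE => /forall_inP /(_ x xS).
Qed.

Lemma exists_forces_box (R : realFieldType) (ss : seq nat) :
  ss != [::] -> all (fun k => 0 < k)%N ss -> exists2 K : R, 1 <= K & forces_box ss K.
Proof.
elim: ss => [//|a [|b ss] IHss] _ /andP [a_gt0 ss_pos].
  by exists (a%:R ^+ a); [rewrite exprn_ege1 // ler1n | exact: forces_box_singleton].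
have [K K_ge1 box_ss] := IHss isT ss_pos; case: a a_gt0 => // a _.
exists ((2 * (a.+1 ^ 2)%:R) ^+ (\prod_(j <- b :: ss) j) * 2 ^+ (\prod_(j <- b :: ss) j) * K).
  apply: mulr_ege1 => //; apply: mulr_ege1; apply: exprn_ege1; rewrite ?ler1n //.
  by rewrite mulr_ege1 ?ler1n ?expn_gt0.
exact: forces_box_cons.
Qed.

Lemma all2_nthP {T1 T2 : Type} (r : T1 -> T2 -> bool) (x1 : T1) (x2 : T2) s t :
  reflect (size s = size t /\ forall i, (i < size s)%N -> r (nth x1 s i) (nth x2 t i))
          (all2 r s t).
Proof.
elim: s t => [|x s IHs] [|y t] /=; try by constructor; case.
  by constructor.
apply: (iffP andP) => [[rxy /IHs [size_st rst]] | [[size_st] rst]].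
  by split=> [|[_|i /rst]] //; rewrite size_st.
by split; [exact: (rst 0%N) | apply/IHs; split=> // i; exact: (rst i.+1)].
Qed.

Lemma forces_box_ffun {R : realFieldType} {k : nat} {s : 'I_k.+1 -> nat}
    {sigma : 'I_k.+1 -> 'I_k.+1} {ss : seq nat} {K : R} :
  involutive sigma -> size ss = k.+1 -> (forall j : 'I_k.+1, nth 0%N ss j = s (sigma j)) ->
  forces_box ss K ->
  forall (X : finType) (G : pred {ffun 'I_k.+1 -> X}), (0 < #|X|)%N ->
    K <= density R G ^+ (\prod_(j <- ss) j) * #|X|%:R ^+ last 0 ss ->
    exists2 V : 'I_k.+1 -> {set X}, (forall i, #|V i| = s i) &
      forall phi : {ffun 'I_k.+1 -> X}, (forall i, phi i \in V i) -> G phi.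
Proof.
move=> sigmaK size_ss nth_ss box_ss X G X_gt0 G_dense.
pose phi (t : k.+1.-tuple X) : {ffun 'I_k.+1 -> X} := [ffun i => tnth t (sigma i)].
pose psi (f : {ffun 'I_k.+1 -> X}) : k.+1.-tuple X := [tuple f (sigma j) | j < k.+1].
have phiK : cancel psi phi by move=> f; apply/ffunP => i; rewrite ffunE tnth_mktuple sigmaK.
have psiK : cancel phi psi by move=> t; apply: eq_from_tnth => j; rewrite tnth_mktuple ffunE sigmaK.
pose P : pred (k.+1.-tuple X) := fun t => G (phi t).
have dens_P : density R P = density R G.
  rewrite /density card_tuple card_ffun card_ord; congr (_%:R / _).
  rewrite -(card_image (can_inj psiK)); apply: eq_card => f.
  apply/imageP/idP => [[t Pt ->] // | Gf].
  by exists (psi f); rewrite ?phiK // unfold_in /P phiK.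
have := box_ss X; rewrite size_ss => /(_ P X_gt0); rewrite dens_P => /(_ G_dense).
case=> V /(all2_nthP _ set0 0%N) [size_V card_V] box_V.
exists (fun i => nth set0 V (sigma i)).
  move=> i; have := card_V (sigma i); rewrite size_V size_ss ltn_ord nth_ss sigmaK.
  by move=> /(_ isT) /eqP.
move=> f f_box; rewrite -[f]phiK; apply: box_V; apply/(all2_nthP _ (f ord0) set0).
split=> [|i]; rewrite size_tuple ?size_V // => lt_i.
by rewrite -[i]/(nat_of_ord (Ordinal lt_i)) -tnth_nth tnth_mktuple -{2}[Ordinal lt_i]sigmaK.
Qed.

Lemma exists_forces_box_ffun (R : realFieldType) {k : nat} {s : 'I_k.+1 -> nat} :
  (forall i, 0 < s i)%N ->
  exists2 K : R, 1 <= K & forall (X : finType) (G : pred {ffun 'I_k.+1 -> X}),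
    (0 < #|X|)%N -> K <= density R G ^+ (\prod_i s i) * #|X|%:R ^+ (\max_i s i) ->
    exists2 V : 'I_k.+1 -> {set X}, (forall i, #|V i| = s i) &
      forall phi : {ffun 'I_k.+1 -> X}, (forall i, phi i \in V i) -> G phi.
Proof.
move=> s_gt0.
(* Reorder the sides so that a largest one comes last. *)
pose sigma := tperm [arg max_(i > ord0) s i] ord_max.
have sigmaK : involutive sigma by move=> i; rewrite tpermK.
set ss := [seq s (sigma j) | j <- enum 'I_k.+1].
have size_ss : size ss = k.+1 by rewrite size_map size_enum_ord.
have nth_ss (j : 'I_k.+1) : nth 0%N ss j = s (sigma j).
  by rewrite (nth_map ord0) ?size_enum_ord // nth_ord_enum.
have prod_ss : (\prod_(j <- ss) j = \prod_i s i)%N.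
  rewrite big_map big_enum /= (reindex_inj (@perm_inj _ sigma)) /=.
  by apply: eq_bigr => i _; rewrite sigmaK.
have last_ss : last 0%N ss = (\max_i s i)%N.
  by rewrite -nth_last size_ss (nth_ss ord_max) tpermR (bigop.bigmax_eq_arg ord0).
have [||K K_ge1 box_ss] := exists_forces_box R ss.
- by rewrite -size_eq0 size_ss.
- by apply/allP => _ /mapP [j _ ->].
exists K => // X G X_gt0; rewrite -prod_ss -last_ss.
exact: (forces_box_ffun sigmaK size_ss nth_ss box_ss X G X_gt0).
Qed.

(** * Averaging over injections *)

Section PermOfEqualCard.
Variables (T : finType) (A B : {set T}).
Hypothesis cardAB : #|A| = #|B|.

(* Listing A before its complement, and B before its complement, matches A with B. *)
Let sA := enum A ++ enum (~: A).
Let sB := enum B ++ enum (~: B).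

Let mem_sA x : x \in sA.
Proof. by rewrite mem_cat !mem_enum inE orbN. Qed.

Let size_sB : size sB = size sA.
Proof. by rewrite !size_cat -!cardE !cardsC. Qed.

Let uniq_sB : uniq sB.
Proof.
rewrite cat_uniq !enum_uniq andbT /=; apply/hasPn => x.
by rewrite !mem_enum inE.
Qed.

Let g x := nth x sB (index x sA).

Let g_inj : injective g.
Proof.
move=> x y; rewrite /g; have ltS z : (index z sA < size sB)%N by rewrite size_sB index_mem mem_sA.
rewrite (set_nth_default x y (ltS y)) => /eqP; rewrite nth_uniq ?uniq_sB // => /eqP.
by move/(congr1 (nth x sA)); rewrite !nth_index.
Qed.

Lemma exists_perm_imset : exists s : {perm T}, s @: A = B.
Proof.
exists (perm g_inj); apply/eqP; rewrite eqEcard card_imset ?cardAB ?leqnn ?andbT; last first.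
  exact: perm_inj.
apply/subsetP => _ /imsetP [x xA ->]; rewrite permE /g.
have ltA : (index x (enum A) < size (enum B))%N by rewrite -!cardE -cardAB cardE index_mem mem_enum.
by rewrite /sA index_cat mem_enum xA /sB nth_cat ltA -mem_enum mem_nth.
Qed.

End PermOfEqualCard.

Arguments exists_perm_imset {T A B}.

Definition inj_ffun (D T : finType) : {set {ffun D -> T}} :=
  [set f : {ffun D -> T} | injectiveb f].

Section ImageCount.
Variables (D T : finType) (F : {set D}).

Let fibre (e : {set T}) := #|[set f : {ffun D -> T} in inj_ffun D T | f @: F == e]|.

Let fibre_le (e e' : {set T}) : #|e| = #|e'| -> (fibre e <= fibre e')%N.
Proof.
move=> ce; have [s se] := exists_perm_imset ce.
pose h (f : {ffun D -> T}) := [ffun i => s (f i)].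
have h_inj : injective h.
  by move=> f f' /ffunP hff'; apply/ffunP => i; have := hff' i; rewrite !ffunE => /perm_inj.
rewrite /fibre -(card_imset _ h_inj); apply: subset_leq_card; apply/subsetP => _ /imsetP [f + ->].
rewrite !inE => /andP [/injectiveP f_inj /eqP fe]; apply/andP; split.
  by apply/injectiveP => i j; rewrite !ffunE => /perm_inj /f_inj.
by rewrite -se -fe -imset_comp; apply/eqP/eq_imset => i; rewrite /= ffunE.
Qed.

Lemma card_inj_ffun_imset_in (E : {set {set T}}) :
  (#|[set f : {ffun D -> T} in inj_ffun D T | f @: F \in E]| * 'C(#|T|, #|F|) =
   #|[set e in E | #|e| == #|F|]| * #|inj_ffun D T|)%N.
Proof.
set k := #|F|; set Ek := [set e in E | #|e| == k]; set Kk := [set e : {set T} | #|e| == k].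
have card_imF f : f \in inj_ffun D T -> #|f @: F| = k.
  by rewrite inE => /injectiveP f_inj; rewrite card_imset.
have Ek_sub : {subset Ek <= Kk} by move=> e; rewrite !inE => /andP [].
have sum_fibres (P : {set {set T}}) : {subset P <= Kk} ->
    #|[set f in inj_ffun D T | f @: F \in P]| = (\sum_(e in P) fibre e)%N.
  move=> PK; rewrite -sum1dep_card.
  rewrite (partition_big (fun f : {ffun D -> T} => f @: F) (mem P)) /=; last first.
    by move=> f /andP [].
  apply: eq_bigr => e Pe; rewrite sum1dep_card /fibre; apply: eq_card => f; rewrite !inE.
  by case: eqP => [-> | _]; rewrite ?Pe ?andbF ?andbT.
have fibre_const e e' : e \in Kk -> e' \in Kk -> fibre e = fibre e'.
  by rewrite !inE => /eqP ce /eqP ce'; apply/eqP; rewrite eqn_leq !fibre_le // ce ce'.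
have inj_E : [set f in inj_ffun D T | f @: F \in E] = [set f in inj_ffun D T | f @: F \in Ek].
  apply/setP => f; rewrite !inE; case f_inj: (injectiveb f) => //=.
  by rewrite card_imF ?inE // eqxx andbT.
have inj_K : inj_ffun D T = [set f in inj_ffun D T | f @: F \in Kk].
  apply/setP => f; rewrite !inE; case f_inj: (injectiveb f) => //=.
  by rewrite card_imF ?inE // eqxx.
rewrite inj_E [in RHS]inj_K !sum_fibres // -card_draws -/Kk big_distrl /=.
transitivity (\sum_(e in Ek) \sum_(e' in Kk) fibre e')%N; last by rewrite sum_nat_const.
apply: eq_bigr => e eEk; rewrite mulnC -sum_nat_const; apply: eq_bigr => e' e'Kk.
exact: fibre_const (Ek_sub _ eEk) e'Kk.
Qed.

End ImageCount.

Arguments card_inj_ffun_imset_in {D T} F E.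

Definition good_maps {D T : finType} (L : {set {set D}}) (E : {set {set T}}) :
  {set {ffun D -> T}} := [set f in inj_ffun D T | [forall F in L, f @: F \in E]].

Section Flag.
Variables (Rs : seq nat) (m : nat) (L : {set {set 'I_m}}).
Hypothesis L_flag : is_flag Rs L.

Lemma flag_edge_size {F} : F \in L -> #|F| \in Rs.
Proof. by case/andP: L_flag => /forall_inP L_sizes _ /L_sizes. Qed.

Lemma flag_edges_of_size {k} : k \in Rs -> #|[set F in L | #|F| == k]| = 1%N.
Proof. by case/andP: L_flag => _ /allP one_edge /one_edge /eqP. Qed.

Lemma flag_edge_of_size {k} : k \in Rs -> exists2 F, F \in L & #|F| = k.
Proof.
move=> kRs; have /card_gt0P [F] : (0 < #|[set F in L | #|F| == k]|)%N.
  by rewrite (flag_edges_of_size kRs).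
by rewrite inE => /andP [FL /eqP]; exists F.
Qed.

Lemma card_flag : uniq Rs -> #|L| = size Rs.
Proof.
move=> Rs_uniq; rewrite -sum1_card.
transitivity (\sum_(F in L) \sum_(k <- Rs | #|F| == k) 1)%N.
  apply: eq_bigr => F /flag_edge_size FRs; rewrite sum1_count.
  by rewrite (@eq_count _ _ (pred1 #|F|)) ?count_uniq_mem ?FRs // => k; rewrite /= eq_sym.
rewrite (exchange_big_dep xpredT) //= -sum1_size big_seq [RHS]big_seq.
apply: eq_bigr => k kRs; rewrite sum1dep_card -(flag_edges_of_size kRs).
by apply: eq_card => F; rewrite !inE.
Qed.

Variable R : realType.

Lemma hn_flag_sum (n : nat) (E : {set {set 'I_n}}) : {in E, forall e : {set 'I_n}, #|e| \in Rs} ->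
  hn R E = \sum_(F in L) #|[set e in E | #|e| == #|F|]|%:R / 'C(n, #|F|)%:R.
Proof.
move=> E_sizes; rewrite /hn.
transitivity (\sum_(e in E) \sum_(F in L | #|e| == #|F|) ('C(n, #|F|)%:R : R)^-1).
  apply: eq_bigr => e eE.
  rewrite (eq_bigr (fun _ => ('C(n, #|e|)%:R : R)^-1)); last by move=> F /andP [_ /eqP ->].
  rewrite sumr_const; have -> : #|[pred F in L | #|e| == #|F|]| = 1%N.
    by rewrite -(flag_edges_of_size (E_sizes e eE)); apply: eq_card => F; rewrite !inE eq_sym.
  by rewrite mulr1n.
rewrite (exchange_big_dep (mem L)) /=; last by move=> e F _ /andP [].
apply: eq_bigr => F FL; rewrite sumr_const -[_ *+ #|_|]mulr_natl; congr (_%:R * _).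
by apply: eq_card => e; rewrite !inE /= FL.
Qed.

Lemma hn_mul_card_inj (n : nat) (E : {set {set 'I_n}}) : (m <= n)%N ->
  {in E, forall e : {set 'I_n}, #|e| \in Rs} ->
  hn R E * #|inj_ffun 'I_m 'I_n|%:R =
  (\sum_(F in L) #|[set f in inj_ffun 'I_m 'I_n | f @: F \in E]|)%:R.
Proof.
move=> le_mn E_sizes; rewrite hn_flag_sum // mulr_suml natr_sum; apply: eq_bigr => F _.
have C_gt0 : (0 < 'C(n, #|F|))%N by rewrite bin_gt0 (leq_trans (max_card _)) ?card_ord.
have := card_inj_ffun_imset_in F E; rewrite card_ord => count_eq.
by rewrite mulrAC -natrM -count_eq natrM mulfK // pnatr_eq0 -lt0n.
Qed.

Lemma card_flag_edges_mapped_le (n : nat) (E : {set {set 'I_n}}) (f : {ffun 'I_m -> 'I_n}) :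
  uniq Rs -> f \in inj_ffun 'I_m 'I_n ->
  (#|[set F in L | f @: F \in E]| <= (size Rs).-1 + (f \in good_maps L E))%N.
Proof.
move=> Rs_uniq f_inj; rewrite -(card_flag Rs_uniq).
have sub_L : [set F in L | f @: F \in E] \subset L.
  by apply/subsetP => F; rewrite inE => /andP [].
have [good | not_good] := boolP (f \in good_maps L E).
  by rewrite addn1 (leq_trans _ (leqSpred _)) // subset_leq_card.
move: not_good; rewrite inE f_inj /= => /forall_inPn [F0 F0L F0E].
rewrite addn0 (cardsD1 F0 L) F0L add1n /= subset_leq_card //.
apply/subsetP => F; rewrite !inE => /andP [FL FE]; rewrite FL andbT.
by apply: contraTneq FE => ->.
Qed.

Lemma hn_le_good_ratio (n : nat) (E : {set {set 'I_n}}) : uniq Rs -> (m <= n)%N ->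
  {in E, forall e : {set 'I_n}, #|e| \in Rs} ->
  hn R E <= (size Rs).-1%:R + #|good_maps L E|%:R / #|inj_ffun 'I_m 'I_n|%:R.
Proof.
move=> Rs_uniq le_mn E_sizes; set inj := inj_ffun 'I_m 'I_n.
have inj_gt0 : (0 : R) < #|inj|%:R.
  by have := card_inj_ffuns 'I_m 'I_n; rewrite !card_ord ltr0n cardsE => ->; rewrite ffact_gt0.
rewrite -(ler_pM2r inj_gt0) mulrDl divfK ?gt_eqF // hn_mul_card_inj // -natrM -natrD ler_nat.
have -> : (\sum_(F in L) #|[set f in inj | f @: F \in E]| =
           \sum_(f in inj) #|[set F in L | f @: F \in E]|)%N.
  under eq_bigr do rewrite -sum1dep_card; under [in RHS]eq_bigr do rewrite -sum1dep_card.
  rewrite (exchange_big_dep (mem inj)) /=; last by move=> F f _ /andP [].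
  by apply: eq_bigr => f f_inj; apply: eq_bigl => F; rewrite f_inj.
apply: (@leq_trans (\sum_(f in inj) ((size Rs).-1 + (f \in good_maps L E)))).
  by apply: leq_sum => f; apply: card_flag_edges_mapped_le.
rewrite big_split /= sum_nat_const mulnC leq_add2l -sum1_card big_mkcond [in leqRHS]big_mkcond.
by apply: leq_sum => f _; case: (f \in inj); case: (f \in good_maps L E).
Qed.

End Flag.

Arguments flag_edge_size {Rs m L} L_flag {F}.
Arguments flag_edge_of_size {Rs m L} L_flag {k}.
Arguments hn_le_good_ratio {Rs m L} L_flag R {n} E.

(** * Blowups *)

Section BoxEmbedding.
Variables (m n : nat) (s : 'I_m -> nat) (V : 'I_m -> {set 'I_n}).
Hypotheses (s_gt0 : forall i, (0 < s i)%N) (card_V : forall i, #|V i| = s i).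

Let box_vertex (b : bvert s) : 'I_n := enum_val (cast_ord (esym (card_V (tag b))) (tagged b)).

Let box_vertexP b : box_vertex b \in V (tag b).
Proof. exact: enum_valP. Qed.

Let box_vertex_tag_inj b1 b2 : tag b1 = tag b2 -> box_vertex b1 = box_vertex b2 -> b1 = b2.
Proof.
case: b1 b2 => [i j1] [i' j2] /= eq_ii'; subst i'.
by rewrite /box_vertex /= => /enum_val_inj /cast_ord_inj ->.
Qed.

Let exists_box_map_through {B : {set bvert s}} : {in B &, injective tag} ->
  exists2 phi : {ffun 'I_m -> 'I_n}, (forall i, phi i \in V i) &
    {in B, forall b, phi (tag b) = box_vertex b}.
Proof.
move=> tag_inj; pose base i : bvert s := Tagged (fun j => 'I_(s j)) (Ordinal (s_gt0 i)).
exists [ffun i => box_vertex (odflt (base i) [pick b in B | tag b == i])].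
  by move=> i; rewrite ffunE; case: pickP => [b /andP [_ /eqP <-] | _] /=; exact: box_vertexP.
move=> b bB; rewrite ffunE; case: pickP => [b' /andP [b'B /eqP tag_b'] | /(_ b)] /=.
  by rewrite (tag_inj _ _ b'B bB tag_b').
by rewrite bB eqxx.
Qed.

Lemma box_good_hcontains (L : {set {set 'I_m}}) (E : {set {set 'I_n}}) :
  (forall phi : {ffun 'I_m -> 'I_n}, (forall i, phi i \in V i) -> phi \in good_maps L E) ->
  hcontains (blowup s L) E.
Proof.
move=> box_good.
have box_inj (phi : {ffun 'I_m -> 'I_n}) : (forall i, phi i \in V i) -> injective phi.
  by move=> /(box_good phi); rewrite !inE => /andP [/injectiveP].
have bv_inj : injective box_vertex.
  move=> b1 b2 eq12; case: (tag b1 =P tag b2) => [|ne]; first by move/box_vertex_tag_inj; apply.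
  have tag_inj : {in [set b1; b2] &, injective tag}.
    by move=> x y; rewrite !inE => /orP [] /eqP -> /orP [] /eqP -> // e; case: ne; rewrite e.
  have [phi phiV phi_b] := exists_box_map_through tag_inj.
  by case: ne; apply: (box_inj phi phiV); rewrite !phi_b ?eq12 // !inE eqxx ?orbT.
rewrite /hcontains; apply/existsP; exists [ffun b => box_vertex b]; apply/andP; split.
  by apply/injectiveP => b1 b2; rewrite !ffunE; apply: bv_inj.
apply/forall_inP => B; rewrite inE => /exists_inP [F FL /andP [/eqP tagB /eqP cardB]].
have tag_inj : {in B &, injective tag} by apply/imset_injP; rewrite tagB cardB.
have [phi phiV phi_b] := exists_box_map_through tag_inj.
suff -> : [ffun b => box_vertex b] @: B = phi @: F.
  by have := box_good phi phiV; rewrite inE => /andP [_ /forall_inP /(_ F FL)].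
by rewrite -tagB -imset_comp; apply: eq_in_imset => b bB /=; rewrite ffunE phi_b.
Qed.

End BoxEmbedding.

Arguments box_good_hcontains {m n s V} s_gt0 card_V {L E}.

Section Blowup.
Variables (Rs : seq nat) (m : nat) (L : {set {set 'I_m}}) (s : 'I_m -> nat).
Hypothesis L_flag : is_flag Rs L.

Lemma blowup_edge_size B : B \in blowup s L -> #|B| \in Rs.
Proof.
by rewrite inE => /exists_inP [F FL /andP [_ /eqP ->]]; exact: (flag_edge_size L_flag FL).
Qed.

Lemma blowup_edge_of_size k : (forall i, 0 < s i)%N -> k \in Rs ->
  exists2 B, B \in blowup s L & #|B| = k.
Proof.
move=> s_gt0 /(flag_edge_of_size L_flag) [F FL <-].
pose base i : bvert s := Tagged (fun j => 'I_(s j)) (Ordinal (s_gt0 i)).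
have base_inj : injective base by move=> i j /(congr1 tag).
exists (base @: F); last by rewrite card_imset.
rewrite inE; apply/exists_inP; exists F; rewrite // card_imset // eqxx andbT.
by rewrite -imset_comp imset_id.
Qed.

End Blowup.

Arguments blowup_edge_size {Rs m L s} L_flag {B}.
Arguments blowup_edge_of_size {Rs m L s} L_flag {k}.

Lemma hn_setU (R : realType) (n : nat) (E1 E2 : {set {set 'I_n}}) :
  [disjoint E1 & E2] -> hn R (E1 :|: E2) = hn R E1 + hn R E2.
Proof. by move=> E12; rewrite /hn (eq_bigl [predU E1 & E2]) ?bigU // => e; rewrite !inE. Qed.

Lemma hn_uniform (R : realType) (n k : nat) :
  (k <= n)%N -> hn R [set e : {set 'I_n} | #|e| == k] = 1.
Proof.
move=> le_kn; rewrite /hn (eq_bigr (fun _ => ('C(n, k)%:R : R)^-1)); last first.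
  by move=> e; rewrite inE => /eqP ->.
by rewrite sumr_const card_draws card_ord -[_^-1 *+ _]mulr_natl mulfV // pnatr_eq0 -lt0n bin_gt0.
Qed.

Lemma hn_sizes (R : realType) (n : nat) {Ks : seq nat} :
  uniq Ks -> {in Ks, forall k, k <= n}%N ->
  hn R [set e : {set 'I_n} | #|e| \in Ks] = (size Ks)%:R.
Proof.
elim: Ks => [|k Ks IHKs] /= => [_ _ | /andP [kKs Ks_uniq] le_n].
  by rewrite /hn big_pred0 // => e; rewrite inE.
have -> : [set e : {set 'I_n} | #|e| \in k :: Ks] =
          [set e : {set 'I_n} | #|e| == k] :|: [set e : {set 'I_n} | #|e| \in Ks].
  by apply/setP => e; rewrite !inE.
rewrite hn_setU ?hn_uniform ?IHKs ?le_n ?mem_head //.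
- by rewrite addrC natr1.
- by move=> j jKs; rewrite le_n // in_cons jKs orbT.
rewrite -setI_eq0; apply/eqP/setP => e; rewrite !inE.
by apply/negbTE; case: eqP => // ->; rewrite (negbTE kKs).
Qed.

Lemma pin_ge_size (R : realType) {Rs : seq nat} {m : nat} {L : {set {set 'I_m}}}
    {s : 'I_m -> nat} {n : nat} :
  Rs != [::] -> uniq Rs -> is_flag Rs L -> (forall i, 0 < s i)%N -> (m <= n)%N ->
  (size Rs).-1%:R <= pin R (blowup s L) n.
Proof.
case: Rs => [//|k0 Rs] _ /= /andP [k0Rs Rs_uniq] L_flag s_gt0 le_mn.
have le_n k : k \in k0 :: Rs -> (k <= n)%N.
  case/(flag_edge_of_size L_flag) => F _ <-.
  by rewrite (leq_trans (max_card _)) ?card_ord.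
rewrite -(hn_sizes R n Rs_uniq) => [|k kRs]; last by rewrite le_n // in_cons kRs orbT.
rewrite /pin; apply: le_bigmax_cond; apply/andP; split.
  apply/forall_inP => e; rewrite inE => eRs; apply/exists_inP.
  have [|B BL <-] := blowup_edge_of_size L_flag s_gt0 (k := #|e|); last by exists B.
  by rewrite in_cons eRs orbT.
apply/negP => /existsP [f /andP [/injectiveP f_inj /forall_inP f_edges]].
have [B0 B0L cardB0] := blowup_edge_of_size L_flag s_gt0 (mem_head k0 Rs).
by have := f_edges B0 B0L; rewrite inE card_imset // cardB0 (negbTE k0Rs).
Qed.

(** * Asymptotics *)

Lemma ler_powR_of_lt (R : realType) (x K : R) (n p M : nat) :
  0 <= x -> 0 < K -> (0 < n)%N -> (0 < p)%N -> x ^+ p * n%:R ^+ M < K ->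
  x <= powR K p%:R^-1 * powR n%:R (- (M%:R / p%:R)).
Proof.
move=> x_ge0 K_gt0 n_gt0 p_gt0 small; rewrite leNgt; apply/negP => large.
set y := powR K _ * _ in large.
have p_neq0 : (p%:R : R) != 0 by rewrite pnatr_eq0 -lt0n.
have y_pow : y ^+ p = K / n%:R ^+ M.
  rewrite /y exprMn -!powR_mulrn ?powR_ge0 // -!powRrM mulVf // powRr1 ?(ltW K_gt0) //.
  by rewrite mulNr mulfVK // powRN powR_mulrn // ler0n.
have y_ge0 : 0 <= y by rewrite mulr_ge0 ?powR_ge0.
have : y ^+ p < x ^+ p by rewrite ltrXn2r // -?lt0n.
rewrite y_pow ltr_pdivrMr ?exprn_gt0 ?ltr0n // => lt_K.
by move: small; rewrite ltNge (ltW lt_K).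
Qed.

Lemma inj_ratio_le_density (R : realFieldType) {m n : nat} (G : pred {ffun 'I_m -> 'I_n}) :
  (2 * m <= n)%N -> #|G|%:R / #|inj_ffun 'I_m 'I_n|%:R <= 2 ^+ m * density R G.
Proof.
move=> le_2m_n; have := card_inj_ffuns 'I_m 'I_n; rewrite !card_ord cardsE => ->.
have ffact_gt0 : (0 : R) < (n ^_ m)%:R by rewrite ltr0n ffact_gt0; lia.
have pow_gt0 : (0 : R) < (n ^ m)%:R by rewrite ltr0n expn_gt0; lia.
rewrite /density card_ffun !card_ord mulrCA ler_wpM2l ?ler0n // ler_pdivlMr //.
rewrite mulrC ler_pdivrMr // -natrX -natrM ler_nat; exact: expn_leq_ffact_double.
Qed.

Lemma pin_le_asymptotic (R : realType) {Rs : seq nat} {m : nat} {L : {set {set 'I_m.+1}}}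
    {s : 'I_m.+1 -> nat} :
  uniq Rs -> is_flag Rs L -> (forall i, 0 < s i)%N ->
  exists C : R, forall n : nat, (2 * m.+1 <= n)%N ->
    pin R (blowup s L) n <=
    (size Rs).-1%:R + C * powR n%:R (- ((\max_i s i)%N%:R / (\prod_i s i)%N%:R)).
Proof.
move=> Rs_uniq L_flag s_gt0; have [K K_ge1 forces] := exists_forces_box_ffun R s_gt0.
have K_gt0 : 0 < K := lt_le_trans ltr01 K_ge1.
exists (2 ^+ m.+1 * powR K (\prod_i s i)%N%:R^-1) => n le_2m_n.
have n_gt0 : (0 < n)%N by lia.
rewrite /pin; apply: bigmax_le => [|E /andP [E_sizes E_free]].
  by rewrite addr_ge0 ?ler0n // !mulr_ge0 ?exprn_ge0 ?powR_ge0.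
apply: le_trans (hn_le_good_ratio L_flag R E Rs_uniq _ _) _ => [|e eE|]; first by lia.
  move: E_sizes => /forall_inP /(_ e eE) /exists_inP [B BL /eqP ->].
  exact: (blowup_edge_size L_flag BL).
pose G : pred {ffun 'I_m.+1 -> 'I_n} := [pred f | f \in good_maps L E].
rewrite lerD2l (_ : #|good_maps L E| = #|G|); last by apply: eq_card.
apply: le_trans (inj_ratio_le_density R G le_2m_n) _.
rewrite -mulrA ler_wpM2l ?exprn_ge0 //; apply: ler_powR_of_lt => //.
- exact: density_ge0.
- by rewrite prodn_gt0.
rewrite ltNge; apply/negP => dense.
have := forces _ G; rewrite card_ord => /(_ n_gt0 dense) [V card_V box_V].
by move: E_free; rewrite (box_good_hcontains s_gt0 card_V box_V).
Qed.

Lemma flag_vertices_gt0 {Rs : seq nat} {m : nat} {L : {set {set 'I_m}}} :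
  Rs != [::] -> all (fun k => 0 < k)%N Rs -> is_flag Rs L -> (0 < m)%N.
Proof.
case: Rs => [//|k Rs] _ /andP [k_gt0 _] L_flag.
have [F _ cardF] := flag_edge_of_size L_flag (mem_head k Rs).
by rewrite -(card_ord m) (leq_trans _ (max_card F)) ?cardF.
Qed.

Theorem mainTheorem15 (R : realType) (Rs : seq nat) (m : nat)
    (L : {set {set 'I_m}}) (s : 'I_m -> nat) :
  Rs != [::] -> uniq Rs -> all (fun k => (0 < k)%N) Rs ->
  is_flag Rs L ->
  (forall i, (0 < s i)%N) ->
  let delta : R := ((\max_(i < m) s i)%N)%:R / ((\prod_(i < m) s i)%N)%:R in
  exists C : R, exists N : nat, forall n : nat, (N <= n)%N ->
    `| pin R (blowup s L) n - ((size Rs)%:R - 1) | <= C * powR (n%:R) (- delta).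
Proof.
move=> Rs_ne0 Rs_uniq Rs_gt0 L_flag s_gt0.
case: m L s L_flag s_gt0 => [|m] L s L_flag s_gt0.
  by have := flag_vertices_gt0 Rs_ne0 Rs_gt0 L_flag.
have [C pin_le] := pin_le_asymptotic R Rs_uniq L_flag s_gt0.
exists C, (2 * m.+1)%N => n le_2m_n.
have le_mn : (m.+1 <= n)%N by lia.
have pin_ge := pin_ge_size R Rs_ne0 Rs_uniq L_flag s_gt0 le_mn.
have size_gt0 : (0 < size Rs)%N by rewrite lt0n size_eq0.
have -> : (size Rs)%:R - 1 = (size Rs).-1%:R :> R.
  by rewrite -[in LHS](prednK size_gt0) -natr1 addrK.
rewrite ger0_norm ?subr_ge0 // lerBlDl; exact: pin_le.
Qed.
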